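(* For the class of equations $u_t=[E(x,u)u_x]_x+H(x,u)$ (with $E,H$ regarded as arbitrary smooth functions of $(x,u)$, i.e. as additional dependent variables subject to $E_t=H_t=0$), the Lie algebra of infinitesimal equivalence transformations of the form $$Y=\xi(t,x,u)\partial_t+\tau(t,x,u)\partial_x+\varphi(t,x,u)\partial_u+\chi(t,x,u,E,H)\partial_E+\eta(t,x,u,E,H)\partial_H$$ is spanned by $$Y_1=\partial_t,\quad Y_2=\partial_x,\quad Y_3=\partial_u,\quad Y_4=2t\,\partial_t+x\,\partial_x-2H\,\partial_H,$$ $$Y_5=-t\,\partial_t+E\,\partial_E+H\,\partial_H,\quad Y_6=u\,\partial_u+H\,\partial_H.$$
   Context: An equivalence transformation of the class is a non-degenerate point change of the variables $(t,x,u)$, together with a transformation of the arbitrary elements $E,H$, mapping every equation $u_t=[E(x,u)u_x]_x+H(x,u)$ of the class to an equation $\tilde u_{\tilde t}=[\tilde E(\tilde x,\tilde u)\tilde u_{\tilde x}]_{\tilde x}+\tilde H(\tilde x,\tilde u)$ of the same class. Infinitesimal equivalence transformations are the generators $Y$ as displayed whose appropriate prolongation leaves invariant the system $u_t=[Eu_x]_x+H$, $E_t=0$, $H_t=0$. *)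

From Stdlib Require Import Reals Lra List ClassicalEpsilon.
Open Scope R_scope.

(** Derivative at 0 of a real function (0 if it does not exist).
    It is only ever used on functions that are known to be differentiable. *)
Definition deriv0 (g : R -> R) : R :=
  match excluded_middle_informative (exists l, derivable_pt_lim g 0 l) with
  | left H => proj1_sig (constructive_indefinite_description _ H)
  | right _ => 0
  end.

Definition F3 := R -> R -> R -> R.

Definition pt (f : F3) : F3 := fun t x u => deriv0 (fun h => f (t + h) x u).
Definition px (f : F3) : F3 := fun t x u => deriv0 (fun h => f t (x + h) u).
Definition pu (f : F3) : F3 := fun t x u => deriv0 (fun h => f t x (u + h)).

Definition op3 (i : nat) (f : F3) : F3 :=
  match i with 0 => pt f | 1 => px f | _ => pu f end.
Definition iter3 (l : list nat) (f : F3) : F3 := fold_right op3 f l.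

Definition cont3 (g : F3) : Prop :=
  forall t x u eps, 0 < eps -> exists d, 0 < d /\
    forall t' x' u', Rabs (t' - t) < d -> Rabs (x' - x) < d -> Rabs (u' - u) < d ->
      Rabs (g t' x' u' - g t x u) < eps.

Definition smooth3 (f : F3) : Prop :=
  forall l : list nat, cont3 (iter3 l f) /\
    forall t x u,
      (exists a, derivable_pt_lim (fun h => iter3 l f (t + h) x u) 0 a) /\
      (exists a, derivable_pt_lim (fun h => iter3 l f t (x + h) u) 0 a) /\
      (exists a, derivable_pt_lim (fun h => iter3 l f t x (u + h)) 0 a).

Definition F5 := R -> R -> R -> R -> R -> R.

Definition qt (f : F5) : F5 := fun t x u E H => deriv0 (fun h => f (t + h) x u E H).
Definition qx (f : F5) : F5 := fun t x u E H => deriv0 (fun h => f t (x + h) u E H).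
Definition qu (f : F5) : F5 := fun t x u E H => deriv0 (fun h => f t x (u + h) E H).
Definition qE (f : F5) : F5 := fun t x u E H => deriv0 (fun h => f t x u (E + h) H).
Definition qH (f : F5) : F5 := fun t x u E H => deriv0 (fun h => f t x u E (H + h)).

Definition op5 (i : nat) (f : F5) : F5 :=
  match i with 0 => qt f | 1 => qx f | 2 => qu f | 3 => qE f | _ => qH f end.
Definition iter5 (l : list nat) (f : F5) : F5 := fold_right op5 f l.

Definition cont5 (g : F5) : Prop :=
  forall t x u E H eps, 0 < eps -> exists d, 0 < d /\
    forall t' x' u' E' H', Rabs (t' - t) < d -> Rabs (x' - x) < d -> Rabs (u' - u) < d ->
      Rabs (E' - E) < d -> Rabs (H' - H) < d ->
      Rabs (g t' x' u' E' H' - g t x u E H) < eps.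

Definition smooth5 (f : F5) : Prop :=
  forall l : list nat, cont5 (iter5 l f) /\
    forall t x u E H,
      (exists a, derivable_pt_lim (fun h => iter5 l f (t + h) x u E H) 0 a) /\
      (exists a, derivable_pt_lim (fun h => iter5 l f t (x + h) u E H) 0 a) /\
      (exists a, derivable_pt_lim (fun h => iter5 l f t x (u + h) E H) 0 a) /\
      (exists a, derivable_pt_lim (fun h => iter5 l f t x u (E + h) H) 0 a) /\
      (exists a, derivable_pt_lim (fun h => iter5 l f t x u E (H + h)) 0 a).

(** ----- Prolongation of
   Y = xi d_t + tau d_x + phi d_u + chi d_E + eta d_H -----
   Jet coordinates: u_t, u_x, u_tx, u_xx for u = u(t,x);
   E_t, E_x, E_u, H_t, H_x, H_u for the arbitrary elements E, H regarded
   as dependent variables of (t,x,u). *)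
Definition Dt3 (t x u ut : R) (g : F3) : R := pt g t x u + ut * pu g t x u.
Definition Dx3 (t x u ux : R) (g : F3) : R := px g t x u + ux * pu g t x u.
Definition Dxx3 (t x u ux uxx : R) (g : F3) : R :=
  px (px g) t x u + ux * (pu (px g) t x u + px (pu g) t x u)
  + ux ^ 2 * pu (pu g) t x u + uxx * pu g t x u.

Definition phi_t (xi tau phi : F3) (t x u ut ux : R) : R :=
  Dt3 t x u ut phi - ut * Dt3 t x u ut xi - ux * Dt3 t x u ut tau.
Definition phi_x (xi tau phi : F3) (t x u ut ux : R) : R :=
  Dx3 t x u ux phi - ut * Dx3 t x u ux xi - ux * Dx3 t x u ux tau.
Definition phi_xx (xi tau phi : F3) (t x u ut ux utx uxx : R) : R :=
  Dxx3 t x u ux uxx phi - 2 * utx * Dx3 t x u ux xi - ut * Dxx3 t x u ux uxx xi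
  - 2 * uxx * Dx3 t x u ux tau - ux * Dxx3 t x u ux uxx tau.

Definition chi_t (xi tau phi : F3) (chi : F5) (t x u E H Et Ex Eu Ht : R) : R :=
  qt chi t x u E H + Et * qE chi t x u E H + Ht * qH chi t x u E H
  - Et * pt xi t x u - Ex * pt tau t x u - Eu * pt phi t x u.
Definition chi_x (xi tau phi : F3) (chi : F5) (t x u E H Et Ex Eu Hx : R) : R :=
  qx chi t x u E H + Ex * qE chi t x u E H + Hx * qH chi t x u E H
  - Et * px xi t x u - Ex * px tau t x u - Eu * px phi t x u.
Definition chi_u (xi tau phi : F3) (chi : F5) (t x u E H Et Ex Eu Hu : R) : R :=
  qu chi t x u E H + Eu * qE chi t x u E H + Hu * qH chi t x u E H
  - Et * pu xi t x u - Ex * pu tau t x u - Eu * pu phi t x u.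
Definition eta_t (xi tau phi : F3) (eta : F5) (t x u E H Et Ht Hx Hu : R) : R :=
  qt eta t x u E H + Et * qE eta t x u E H + Ht * qH eta t x u E H
  - Ht * pt xi t x u - Hx * pt tau t x u - Hu * pt phi t x u.

(* pr Y applied to  u_t - E u_xx - E_x u_x - E_u u_x^2 - H
   (i.e. u_t - [E u_x]_x - H, with E_x, E_u partial derivatives of E) *)
Definition prY_main (xi tau phi : F3) (chi eta : F5)
    (t x u E H ut ux utx uxx Et Ex Eu Ht Hx Hu : R) : R :=
  phi_t xi tau phi t x u ut ux
  - (chi t x u E H * uxx + E * phi_xx xi tau phi t x u ut ux utx uxx
     + chi_x xi tau phi chi t x u E H Et Ex Eu Hx * ux
     + Ex * phi_x xi tau phi t x u ut ux
     + chi_u xi tau phi chi t x u E H Et Ex Eu Hu * ux ^ 2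
     + 2 * Eu * ux * phi_x xi tau phi t x u ut ux + eta t x u E H).

(** Infinitesimal invariance criterion for the system
      u_t = [E u_x]_x + H,  E_t = 0,  H_t = 0 :
    the prolonged Y annihilates each equation on the solution manifold. *)
Definition is_equiv_generator (xi tau phi : F3) (chi eta : F5) : Prop :=
  (forall t x u E H ux utx uxx Ex Eu Hx Hu,
     let ut := E * uxx + Ex * ux + Eu * ux ^ 2 + H in
     prY_main xi tau phi chi eta t x u E H ut ux utx uxx 0 Ex Eu 0 Hx Hu = 0) /\
  (forall t x u E H Ex Eu Hx Hu,
     chi_t xi tau phi chi t x u E H 0 Ex Eu 0 = 0 /\
     eta_t xi tau phi eta t x u E H 0 0 Hx Hu = 0).

From Stdlib Require Import Reals Lra List ClassicalEpsilon FunctionalExtensionality.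
Open Scope R_scope.

(** Sufficiency: each member of the six-parameter family has affine
    coefficients, so all its partial derivatives are constants and the
    invariance conditions reduce to polynomial identities.

    Necessity: evaluating the invariance conditions at well-chosen jet points
    isolates the determining equations one at a time.  The condition for
    [E_t = 0] gives [chi_t = tau_t = phi_t = 0]; the main equation then gives,
    in order, [xi_x = xi_u = 0], [chi = E (2 tau_x - xi_t)], [tau_u = 0],
    [phi_x = 0], [eta = H (phi_u - xi_t)], [phi_uu = tau_xx = 0], and finally
    [chi_t = 0] forces [xi_tt = 0].  Hence [xi], [tau], [phi] are functions of
    [t], [x], [u] alone (their "profiles") with vanishing second derivative,
    i.e. affine.  The integration steps rest on the one-variable fact that a
    function of zero derivative is constant, applied along coordinate lines. *)

Definition slope (g : R -> R) (s : R) : R := deriv0 (fun h => g (s + h)).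

Definition derivable_everywhere (g : R -> R) : Prop :=
  forall s, exists a, derivable_pt_lim (fun h => g (s + h)) 0 a.

Lemma deriv0_spec (g : R -> R) :
  (exists a, derivable_pt_lim g 0 a) -> derivable_pt_lim g 0 (deriv0 g).
Proof.
  intro Hex. unfold deriv0.
  destruct excluded_middle_informative as [e | n]; [| contradiction].
  exact (proj2_sig (constructive_indefinite_description _ e)).
Qed.

Lemma deriv0_unique (g : R -> R) (l : R) : derivable_pt_lim g 0 l -> deriv0 g = l.
Proof.
  intro Hl. apply (uniqueness_limite g 0); [apply deriv0_spec; eauto | exact Hl].
Qed.

Lemma deriv0_affine (g : R -> R) (a b : R) : (forall h, g h = a + b * h) -> deriv0 g = b.
Proof.
  intro Hg. apply deriv0_unique. intros eps Heps. exists (mkposreal 1 Rlt_0_1).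
  intros h Hh _. rewrite !Hg.
  replace ((a + b * (0 + h) - (a + b * 0)) / h - b) with 0 by (field; auto).
  rewrite Rabs_R0; auto.
Qed.

Lemma deriv0_const_fun (g : R -> R) (c : R) : (forall h, g h = c) -> deriv0 g = 0.
Proof. intro Hg. apply (deriv0_affine _ c). intro h. rewrite Hg. ring. Qed.

Lemma slope_spec (g : R -> R) (s : R) :
  (exists a, derivable_pt_lim (fun h => g (s + h)) 0 a) ->
  derivable_pt_lim g s (slope g s).
Proof.
  intros Hex eps Heps. destruct (deriv0_spec _ Hex eps Heps) as [d Hd].
  exists d. intros h Hh0 Hh. specialize (Hd h Hh0 Hh).
  rewrite Rplus_0_l, Rplus_0_r in Hd. exact Hd.
Qed.

(** A function of constant slope [c] is affine with slope [c]
    (mean value theorem). *)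
Lemma affine_of_constant_slope (g : R -> R) (c : R) :
  derivable_everywhere g -> (forall s, slope g s = c) -> forall s, g s = g 0 + c * s.
Proof.
  intros Dg Hc s.
  assert (Hdiff : forall s, derivable_pt_lim (fun s => g s - c * s) s 0).
  { intro y. replace 0 with (c - c * 1) by ring.
    apply (derivable_pt_lim_minus g (fun s => c * s)).
    - rewrite <- (Hc y). exact (slope_spec g y (Dg y)).
    - apply derivable_pt_lim_scal, derivable_pt_lim_id. }
  pose (pr := fun y => exist _ 0 (Hdiff y) : derivable_pt (fun s => g s - c * s) y).
  assert (Hconst := null_derivative_1 _ pr (fun y => derive_pt_eq_0 _ _ _ _ (Hdiff y)) s 0).
  lra.
Qed.

Lemma constant_of_zero_slope (g : R -> R) :
  derivable_everywhere g -> (forall s, slope g s = 0) -> forall s, g s = g 0.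
Proof. intros Dg H0 s. rewrite (affine_of_constant_slope g 0 Dg H0 s). ring. Qed.

Lemma affine_of_zero_second_slope (g : R -> R) :
  derivable_everywhere g -> derivable_everywhere (slope g) ->
  (forall s, slope (slope g) s = 0) ->
  (forall s, slope g s = slope g 0) /\ (forall s, g s = g 0 + slope g 0 * s).
Proof.
  intros Dg Dg' H0. assert (Hc := constant_of_zero_slope _ Dg' H0).
  split; [exact Hc | exact (affine_of_constant_slope g _ Dg Hc)].
Qed.

Lemma slope_affine_comb (g : R -> R) (p q s : R) :
  (exists a, derivable_pt_lim (fun h => g (s + h)) 0 a) ->
  slope (fun y => p * g y + q) s = p * slope g s.
Proof.
  intro Hex. apply deriv0_unique.
  replace (p * slope g s) with (p * slope g s + 0) by ring.
  apply (derivable_pt_lim_plus (fun h => p * g (s + h)) (fun _ => q)).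
  - apply derivable_pt_lim_scal, deriv0_spec, Hex.
  - apply derivable_pt_lim_const.
Qed.

Lemma smooth3_op (i : nat) (f : F3) : smooth3 f -> smooth3 (op3 i f).
Proof.
  intros S l.
  change (iter3 l (op3 i f)) with (fold_right op3 (fold_right op3 f (i :: nil)) l).
  rewrite <- fold_right_app. apply S.
Qed.

Lemma smooth3_derivable_t (f : F3) (x u : R) :
  smooth3 f -> derivable_everywhere (fun s => f s x u).
Proof. intros S s. exact (proj1 (proj2 (S nil) s x u)). Qed.

Lemma smooth3_derivable_x (f : F3) (t u : R) :
  smooth3 f -> derivable_everywhere (fun s => f t s u).
Proof. intros S s. exact (proj1 (proj2 (proj2 (S nil) t s u))). Qed.

Lemma smooth3_derivable_u (f : F3) (t x : R) :
  smooth3 f -> derivable_everywhere (fun s => f t x s).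
Proof. intros S s. exact (proj2 (proj2 (proj2 (S nil) t x s))). Qed.

Definition aff3 (a b c d : R) : F3 := fun t x u => a + b * t + c * x + d * u.
Definition aff5 (a b c d e f : R) : F5 :=
  fun t x u E H => a + b * t + c * x + d * u + e * E + f * H.

Ltac partial_of_affine :=
  repeat (apply functional_extensionality; intro);
  unfold pt, px, pu, qt, qx, qu, qE, qH, aff3, aff5;
  match goal with |- deriv0 ?g = ?c => apply (deriv0_affine g (g 0) c) end;
  intro; cbv beta; ring.

Lemma pt_aff3 a b c d : pt (aff3 a b c d) = aff3 b 0 0 0.
Proof. partial_of_affine. Qed.
Lemma px_aff3 a b c d : px (aff3 a b c d) = aff3 c 0 0 0.
Proof. partial_of_affine. Qed.
Lemma pu_aff3 a b c d : pu (aff3 a b c d) = aff3 d 0 0 0.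
Proof. partial_of_affine. Qed.
Lemma qt_aff5 a b c d e f : qt (aff5 a b c d e f) = aff5 b 0 0 0 0 0.
Proof. partial_of_affine. Qed.
Lemma qx_aff5 a b c d e f : qx (aff5 a b c d e f) = aff5 c 0 0 0 0 0.
Proof. partial_of_affine. Qed.
Lemma qu_aff5 a b c d e f : qu (aff5 a b c d e f) = aff5 d 0 0 0 0 0.
Proof. partial_of_affine. Qed.
Lemma qE_aff5 a b c d e f : qE (aff5 a b c d e f) = aff5 e 0 0 0 0 0.
Proof. partial_of_affine. Qed.
Lemma qH_aff5 a b c d e f : qH (aff5 a b c d e f) = aff5 f 0 0 0 0 0.
Proof. partial_of_affine. Qed.

Lemma affine_family_is_generator (c1 c2 c3 c4 c5 c6 : R) :
  is_equiv_generator (aff3 c1 (2 * c4 - c5) 0 0) (aff3 c2 0 c4 0) (aff3 c3 0 0 c6)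
    (aff5 0 0 0 0 c5 0) (aff5 0 0 0 0 0 (-2 * c4 + c5 + c6)).
Proof.
  unfold is_equiv_generator, prY_main, phi_t, phi_x, phi_xx, chi_x, chi_u, chi_t, eta_t,
    Dt3, Dx3, Dxx3.
  rewrite ?pt_aff3, ?px_aff3, ?pu_aff3, ?qt_aff5, ?qx_aff5, ?qu_aff5, ?qE_aff5, ?qH_aff5.
  (* second derivatives in [Dxx3] *)
  rewrite ?pt_aff3, ?px_aff3, ?pu_aff3.
  unfold aff3, aff5. split; intros; [cbv zeta; ring | split; ring].
Qed.

Ltac extensional_ring Hf :=
  repeat (apply functional_extensionality; intro); rewrite Hf; unfold aff3, aff5; ring.

Lemma sufficiency (xi tau phi : F3) (chi eta : F5) (c1 c2 c3 c4 c5 c6 : R) :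
  (forall t x u, xi t x u = c1 + 2 * c4 * t - c5 * t) ->
  (forall t x u, tau t x u = c2 + c4 * x) ->
  (forall t x u, phi t x u = c3 + c6 * u) ->
  (forall t x u E H, chi t x u E H = c5 * E) ->
  (forall t x u E H, eta t x u E H = - 2 * c4 * H + c5 * H + c6 * H) ->
  is_equiv_generator xi tau phi chi eta.
Proof.
  intros Hxi Htau Hphi Hchi Heta.
  replace xi with (aff3 c1 (2 * c4 - c5) 0 0) by extensional_ring Hxi.
  replace tau with (aff3 c2 0 c4 0) by extensional_ring Htau.
  replace phi with (aff3 c3 0 0 c6) by extensional_ring Hphi.
  replace chi with (aff5 0 0 0 0 c5 0) by extensional_ring Hchi.
  replace eta with (aff5 0 0 0 0 0 (-2 * c4 + c5 + c6)) by extensional_ring Heta.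
  apply affine_family_is_generator.
Qed.

Lemma partials_of_zero (f : F3) : (forall t x u, f t x u = 0) ->
  forall t x u, pt f t x u = 0 /\ px f t x u = 0 /\ pu f t x u = 0.
Proof.
  intros Hf t x u. unfold pt, px, pu.
  repeat split; apply (deriv0_const_fun _ 0); intro; apply Hf.
Qed.

Section Necessity.

Variables (xi tau phi : F3) (chi eta : F5).
Hypotheses (Sxi : smooth3 xi) (Stau : smooth3 tau) (Sphi : smooth3 phi).
Hypothesis Hgen : is_equiv_generator xi tau phi chi eta.

Let main_eq := proj1 Hgen.
Let side_eq := proj2 Hgen.

(** Turn the main invariance condition, specialised at a jet point [A],
    into an explicit relation between derivatives, simplified by the
    determining equations proved so far (rewrite database [determining]). *)
Ltac main_eq_at A :=
  cbv zeta in A;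
  unfold prY_main, phi_t, phi_x, phi_xx, chi_x, chi_u, Dt3, Dx3, Dxx3 in A;
  autorewrite with determining in A.

(** From [E_t = 0]: the coefficient of [E_x], of [E_u] and the
    free term of [chi_t] vanish. *)
Lemma chi_t_zero t x u E H : qt chi t x u E H = 0.
Proof. destruct (side_eq t x u E H 0 0 0 0) as [A _]. unfold chi_t in A. lra. Qed.

Lemma tau_t_zero t x u : pt tau t x u = 0.
Proof.
  destruct (side_eq t x u 0 0 0 0 0 0) as [A _], (side_eq t x u 0 0 1 0 0 0) as [B _].
  unfold chi_t in A, B. lra.
Qed.

Lemma phi_t_zero t x u : pt phi t x u = 0.
Proof.
  destruct (side_eq t x u 0 0 0 0 0 0) as [A _], (side_eq t x u 0 0 0 1 0 0) as [B _].
  unfold chi_t in A, B. lra.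
Qed.

Hint Rewrite tau_t_zero phi_t_zero : determining.

(** Coefficient of [u_tx] at [u_x = 0], then at [u_x = 1]: [xi] depends on [t] only. *)
Lemma xi_x_zero t x u : px xi t x u = 0.
Proof.
  pose proof (main_eq t x u 1 0 0 1 0 0 0 0 0) as A.
  pose proof (main_eq t x u 1 0 0 0 0 0 0 0 0) as B.
  main_eq_at A. main_eq_at B. lra.
Qed.

Hint Rewrite xi_x_zero : determining.

Lemma xi_u_zero t x u : pu xi t x u = 0.
Proof.
  pose proof (main_eq t x u 1 0 1 1 0 0 0 0 0) as A.
  pose proof (main_eq t x u 1 0 1 0 0 0 0 0 0) as B.
  main_eq_at A. main_eq_at B. lra.
Qed.

Lemma xi_xx_zero t x u : px (px xi) t x u = 0.
Proof. apply (partials_of_zero _ xi_x_zero). Qed.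
Lemma xi_xu_zero t x u : pu (px xi) t x u = 0.
Proof. apply (partials_of_zero _ xi_x_zero). Qed.
Lemma xi_ux_zero t x u : px (pu xi) t x u = 0.
Proof. apply (partials_of_zero _ xi_u_zero). Qed.
Lemma xi_uu_zero t x u : pu (pu xi) t x u = 0.
Proof. apply (partials_of_zero _ xi_u_zero). Qed.

Let xi0 (t : R) : R := xi t 0 0.

Lemma xi_profile t x u : xi t x u = xi0 t.
Proof.
  rewrite (constant_of_zero_slope _ (smooth3_derivable_x xi t u Sxi) (fun s => xi_x_zero t s u)).
  exact (constant_of_zero_slope _ (smooth3_derivable_u xi t 0 Sxi) (fun s => xi_u_zero t 0 s) u).
Qed.

Lemma xi_t_profile t x u : pt xi t x u = slope xi0 t.
Proof. unfold pt, slope. f_equal. extensionality h. apply xi_profile. Qed.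

Hint Rewrite xi_u_zero xi_xx_zero xi_xu_zero xi_ux_zero xi_uu_zero xi_t_profile
  : determining.

(** Coefficient of [u_xx] at [u_x = 0]: [chi] is linear in [E]. *)
Lemma chi_form t x u E H : chi t x u E H = E * (2 * px tau t x u - slope xi0 t).
Proof.
  pose proof (main_eq t x u E H 0 0 1 0 0 0 0) as A.
  pose proof (main_eq t x u E H 0 0 0 0 0 0 0) as B.
  main_eq_at A. main_eq_at B. lra.
Qed.

Hint Rewrite chi_form : determining.

(** Coefficient of [u_xx] at [u_x = 1]: [tau] depends on [x] only. *)
Lemma tau_u_zero t x u : pu tau t x u = 0.
Proof.
  pose proof (main_eq t x u 1 0 1 0 1 0 0 0 0) as A.
  pose proof (main_eq t x u 1 0 1 0 0 0 0 0 0) as B.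
  main_eq_at A. main_eq_at B. lra.
Qed.

Let tau0 (x : R) : R := tau 0 x 0.

Lemma tau_profile t x u : tau t x u = tau0 x.
Proof.
  rewrite (constant_of_zero_slope _ (smooth3_derivable_t tau x u Stau) (fun s => tau_t_zero s x u)).
  exact (constant_of_zero_slope _ (smooth3_derivable_u tau 0 x Stau) (fun s => tau_u_zero 0 x s) u).
Qed.

Lemma tau_x_profile t x u : px tau t x u = slope tau0 x.
Proof. unfold px, slope. f_equal. extensionality h. apply tau_profile. Qed.

Lemma tau_xx_profile t x u : px (px tau) t x u = slope (slope tau0) x.
Proof. unfold px at 1. unfold slope at 1. f_equal. extensionality h. apply tau_x_profile. Qed.

Lemma tau_xu_zero t x u : pu (px tau) t x u = 0.
Proof. apply (deriv0_const_fun _ (slope tau0 x)). intro. apply tau_x_profile. Qed.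
Lemma tau_ux_zero t x u : px (pu tau) t x u = 0.
Proof. apply (partials_of_zero _ tau_u_zero). Qed.
Lemma tau_uu_zero t x u : pu (pu tau) t x u = 0.
Proof. apply (partials_of_zero _ tau_u_zero). Qed.

Hint Rewrite tau_u_zero tau_xu_zero tau_ux_zero tau_uu_zero tau_xx_profile tau_x_profile
  : determining.

(** Coefficient of [E_x] at the zero jet: [phi] depends on [u] only. *)
Lemma phi_x_zero t x u : px phi t x u = 0.
Proof.
  pose proof (main_eq t x u 0 0 0 0 0 1 0 0 0) as A.
  pose proof (main_eq t x u 0 0 0 0 0 0 0 0 0) as B.
  main_eq_at A. main_eq_at B. lra.
Qed.

Let phi0 (u : R) : R := phi 0 0 u.

Lemma phi_profile t x u : phi t x u = phi0 u.
Proof.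
  rewrite (constant_of_zero_slope _ (smooth3_derivable_t phi x u Sphi) (fun s => phi_t_zero s x u)).
  exact (constant_of_zero_slope _ (smooth3_derivable_x phi 0 u Sphi) (fun s => phi_x_zero 0 s u) x).
Qed.

Lemma phi_u_profile t x u : pu phi t x u = slope phi0 u.
Proof. unfold pu, slope. f_equal. extensionality h. apply phi_profile. Qed.

Lemma phi_uu_profile t x u : pu (pu phi) t x u = slope (slope phi0) u.
Proof. unfold pu at 1. unfold slope at 1. f_equal. extensionality h. apply phi_u_profile. Qed.

Lemma phi_xx_zero t x u : px (px phi) t x u = 0.
Proof. apply (partials_of_zero _ phi_x_zero). Qed.
Lemma phi_xu_zero t x u : pu (px phi) t x u = 0.
Proof. apply (partials_of_zero _ phi_x_zero). Qed.
Lemma phi_ux_zero t x u : px (pu phi) t x u = 0.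
Proof. apply (deriv0_const_fun _ (slope phi0 u)). intro. apply phi_u_profile. Qed.

Hint Rewrite phi_x_zero phi_xx_zero phi_xu_zero phi_ux_zero phi_uu_profile phi_u_profile
  : determining.

(** Free term: [eta] is linear in [H]. *)
Lemma eta_form t x u E H : eta t x u E H = H * (slope phi0 u - slope xi0 t).
Proof.
  pose proof (main_eq t x u E H 0 0 0 0 0 0 0) as A.
  main_eq_at A. lra.
Qed.

Lemma chi_x_form t x u : qx chi t x u 1 0 = 2 * slope (slope tau0) x.
Proof.
  transitivity (slope (fun s => 2 * slope tau0 s + - slope xi0 t) x).
  - unfold qx, slope at 1. f_equal. extensionality h. rewrite chi_form, tau_x_profile. ring.
  - exact (slope_affine_comb _ _ _ _ (smooth3_derivable_x _ 0 0 (smooth3_op 1 tau Stau) x)).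
Qed.

Lemma chi_u_form t x u : qu chi t x u 1 0 = 0.
Proof.
  apply (deriv0_const_fun _ (2 * slope tau0 x - slope xi0 t)). intro.
  rewrite chi_form, tau_x_profile. ring.
Qed.

Lemma chi_t_form t : qt chi t 0 0 1 0 = -1 * slope (slope xi0) t.
Proof.
  transitivity (slope (fun s => -1 * slope xi0 s + 2 * slope tau0 0) t).
  - unfold qt, slope at 1. f_equal. extensionality h. rewrite chi_form, tau_x_profile. ring.
  - exact (slope_affine_comb _ _ _ _ (smooth3_derivable_t _ 0 0 (smooth3_op 0 xi Sxi) t)).
Qed.

Hint Rewrite eta_form chi_x_form chi_u_form : determining.

(** The main condition at [u_x = 0, 1, -1]: its [u_x^2] and [u_x] coefficients
    give [phi_uu = 0] and [tau_xx = 0]. *)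
Lemma phi_tau_second_slope_zero x u :
  slope (slope phi0) u = 0 /\ slope (slope tau0) x = 0.
Proof.
  pose proof (main_eq 0 x u 1 0 0 0 0 0 0 0 0) as A.
  pose proof (main_eq 0 x u 1 0 1 0 0 0 0 0 0) as B.
  pose proof (main_eq 0 x u 1 0 (-1) 0 0 0 0 0 0) as C.
  main_eq_at A. main_eq_at B. main_eq_at C. split; lra.
Qed.

(** From [E_t = 0] again: [xi_tt = 0]. *)
Lemma xi_second_slope_zero t : slope (slope xi0) t = 0.
Proof. pose proof (chi_t_zero t 0 0 1 0) as A. rewrite chi_t_form in A. lra. Qed.

Lemma necessity :
  exists c1 c2 c3 c4 c5 c6 : R,
    (forall t x u, xi t x u = c1 + 2 * c4 * t - c5 * t) /\
    (forall t x u, tau t x u = c2 + c4 * x) /\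
    (forall t x u, phi t x u = c3 + c6 * u) /\
    (forall t x u E H, chi t x u E H = c5 * E) /\
    (forall t x u E H, eta t x u E H = - 2 * c4 * H + c5 * H + c6 * H).
Proof.
  destruct (affine_of_zero_second_slope xi0 (smooth3_derivable_t xi 0 0 Sxi)
    (smooth3_derivable_t _ 0 0 (smooth3_op 0 xi Sxi)) xi_second_slope_zero)
    as [xi_slope xi_affine].
  destruct (affine_of_zero_second_slope tau0 (smooth3_derivable_x tau 0 0 Stau)
    (smooth3_derivable_x _ 0 0 (smooth3_op 1 tau Stau))
    (fun x => proj2 (phi_tau_second_slope_zero x 0))) as [tau_slope tau_affine].
  destruct (affine_of_zero_second_slope phi0 (smooth3_derivable_u phi 0 0 Sphi)
    (smooth3_derivable_u _ 0 0 (smooth3_op 2 phi Sphi))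
    (fun u => proj1 (phi_tau_second_slope_zero 0 u))) as [phi_slope phi_affine].
  exists (xi0 0), (tau0 0), (phi0 0), (slope tau0 0),
    (2 * slope tau0 0 - slope xi0 0), (slope phi0 0).
  repeat split; intros.
  - rewrite xi_profile, xi_affine. ring.
  - rewrite tau_profile, tau_affine. ring.
  - rewrite phi_profile, phi_affine. ring.
  - rewrite chi_form, tau_x_profile, tau_slope, xi_slope. ring.
  - rewrite eta_form, phi_slope, xi_slope. ring.
Qed.

End Necessity.

Theorem mainTheorem2 :
  forall (xi tau phi : R -> R -> R -> R) (chi eta : R -> R -> R -> R -> R -> R),
    smooth3 xi -> smooth3 tau -> smooth3 phi -> smooth5 chi -> smooth5 eta ->
    (is_equiv_generator xi tau phi chi eta <->
     exists c1 c2 c3 c4 c5 c6 : R,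
       (forall t x u, xi t x u = c1 + 2 * c4 * t - c5 * t) /\
       (forall t x u, tau t x u = c2 + c4 * x) /\
       (forall t x u, phi t x u = c3 + c6 * u) /\
       (forall t x u E H, chi t x u E H = c5 * E) /\
       (forall t x u E H, eta t x u E H = - 2 * c4 * H + c5 * H + c6 * H)).
Proof.
  intros xi tau phi chi eta Sxi Stau Sphi _ _. split.
  - exact (necessity xi tau phi chi eta Sxi Stau Sphi).
  - intros (c1 & c2 & c3 & c4 & c5 & c6 & Hxi & Htau & Hphi & Hchi & Heta).
    exact (sufficiency _ _ _ _ _ _ _ _ _ _ _ Hxi Htau Hphi Hchi Heta).
Qed.
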